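(* Let $W\subset V$ and $M\le n$. The set $W$ is a norming set for $\mathcal{B}_M$ if and only if the spectral norm of the matrix $\mathbf{B}_M(\mathbf{I}_n-\mathbf{S}_W)\mathbf{B}_M$ is strictly less than $1$. In this case the norming constant satisfies $$\|(\mathbf{S}_W\mathbf{B}_M)^{-1}\|\le\frac{1}{1-\|\mathbf{B}_M(\mathbf{I}_n-\mathbf{S}_W)\mathbf{B}_M\|}.$$
   Context: Let $G$ be a graph with vertex set $V=\{v_1,\dots,v_n\}$, symmetric non-negative weighted adjacency matrix $\mathbf{A}$, degree matrix $\mathbf{D}=\mathrm{diag}(\sum_k\mathbf{A}_{ik})$ (positive), and normalized Laplacian $\mathbf{L}=\mathbf{I}_n-\mathbf{D}^{-1/2}\mathbf{A}\mathbf{D}^{-1/2}$. Signals are vectors in $\mathcal{L}(G)\cong\mathbb{R}^n$ with euclidean norm. Fix an orthonormal eigendecomposition $\mathbf{L}=\mathbf{U}\,\mathrm{diag}(\lambda_1,\dots,\lambda_n)\mathbf{U}^\intercal$ with columns $u_1,\dots,u_n$, and let $\mathcal{B}_M=\mathrm{span}\{u_1,\dots,u_M\}$. Define the projections $\mathbf{S}_W x(v)=x(v)$ for $v\in W$ and $0$ otherwise, and $\mathbf{B}_M x=\sum_{k=1}^M(u_k^\intercal x)u_k$. $W$ is a norming set for $\mathcal{B}_M$ if $\mathbf{S}_W\mathbf{B}_M$ is injective on $\mathcal{B}_M$; then $(\mathbf{S}_W\mathbf{B}_M)^{-1}$ denotes the inverse of $\mathbf{S}_W\mathbf{B}_M|_{\mathcal{B}_M}$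 on the image $\mathbf{S}_W(\mathcal{B}_M)$, and the norming constant is $\|(\mathbf{S}_W\mathbf{B}_M)^{-1}\|=\sup_{z\in\mathbf{S}_W(\mathcal{B}_M),\|z\|\le1}\|(\mathbf{S}_W\mathbf{B}_M)^{-1}z\|$. Matrix norms are spectral norms. *)

From HB Require Import structures.
From mathcomp Require Import all_boot all_order all_algebra.
From mathcomp Require Import all_classical all_reals.
Set Implicit Arguments. Unset Strict Implicit. Unset Printing Implicit Defensive.
Import Order.TTheory GRing.Theory Num.Theory.
Local Open Scope ring_scope.
Local Open Scope classical_set_scope.

Section Defs.
Variable R : realType.

Definition vnorm n (x : 'cV[R]_n) : R := Num.sqrt (\sum_i x i 0 ^+ 2).

Definition opnorm m n (A : 'M[R]_(m, n)) : R :=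
  sup [set vnorm (A *m x) | x in [set x : 'cV[R]_n | vnorm x <= 1]].

Definition degree n (A : 'M[R]_n) (i : 'I_n) : R := \sum_k A i k.

(* normalized Laplacian I - D^{-1/2} A D^{-1/2} *)
Definition normLap n (A : 'M[R]_n) : 'M[R]_n :=
  1%:M - \matrix_(i, j) (A i j / (Num.sqrt (degree A i) * Num.sqrt (degree A j))).

(* the subspace B_M = span {u_1,..,u_M} (columns of U, 0-indexed k < M) *)
Definition inBM n (U : 'M[R]_n) (M : nat) (x : 'cV[R]_n) : Prop :=
  exists c : 'I_n -> R, x = \sum_(k < n | (k < M)%N) c k *: col k U.

Definition projB n (U : 'M[R]_n) (M : nat) : 'M[R]_n :=
  \sum_(k < n | (k < M)%N) (col k U *m (col k U)^T).

Definition projS n (W : {set 'I_n}) : 'M[R]_n :=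
  \matrix_(i, j) (if (i == j) && (i \in W) then 1 else 0).

Definition norming n (U : 'M[R]_n) (M : nat) (W : {set 'I_n}) : Prop :=
  forall x y, inBM U M x -> inBM U M y ->
    projS W *m projB U M *m x = projS W *m projB U M *m y -> x = y.

(* norming constant ||(S_W B_M)^{-1}||: sup of ||(S_W B_M)^{-1} z|| over
   z = S_W B_M x in S_W(B_M) with ||z|| <= 1; reindexed by the (unique) x in B_M *)
Definition norming_const n (U : 'M[R]_n) (M : nat) (W : {set 'I_n}) : R :=
  sup [set vnorm x | x in
        [set x : 'cV[R]_n | inBM U M x /\ vnorm (projS W *m projB U M *m x) <= 1]].

End Defs.
Arguments projS {R n} W.

From HB Require Import structures.
From mathcomp Require Import all_boot all_order all_algebra.
From mathcomp Require Import all_classical all_reals.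
From mathcomp Require Import ring lra.
Import Order.TTheory GRing.Theory Num.Theory.

Set Implicit Arguments.
Unset Strict Implicit.
Unset Printing Implicit Defensive.

Local Open Scope ring_scope.

(* Write P = B_M, S = S_W and T = P (I - S) P.  For x in B_M one has
   <x, T x> = |x|^2 - |S x|^2 <= |T| |x|^2, hence (1 - |T|) |x|^2 <= |S x|^2:
   when |T| < 1, S is injective on B_M and |S x| <= 1 forces |x|^2 <= 1/(1 - |T|).
   Conversely, if W is norming then G = P S P + (I - P) is positive definite, hence
   invertible, and G x = P S x on B_M; so |x|^2 <= K |S x|^2 on B_M for some K >= 1,
   and |T y|^2 <= |P y|^2 - |S P y|^2 yields |T| <= sqrt (1 - 1/K) < 1. *)

Section DotProduct.
Variable R : realFieldType.

Definition dot n (x y : 'cV[R]_n) : R := (x^T *m y) 0 0.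

Lemma dotE n (x y : 'cV[R]_n) : dot x y = \sum_i x i 0 * y i 0.
Proof. by rewrite /dot mxE; apply: eq_bigr => i _; rewrite mxE. Qed.

Lemma dot_mulmx m n (A : 'M[R]_(m, n)) x y : dot x (A *m y) = dot (A^T *m x) y.
Proof. by rewrite /dot trmx_mul trmxK mulmxA. Qed.

Variable n : nat.
Implicit Types x y z : 'cV[R]_n.

Lemma dotC x y : dot x y = dot y x.
Proof. by rewrite /dot -(trmxK (x^T *m y)) trmx_mul trmxK mxE. Qed.

Lemma dotDr x y z : dot x (y + z) = dot x y + dot x z.
Proof. by rewrite /dot mulmxDr !mxE. Qed.

Lemma dotBr x y z : dot x (y - z) = dot x y - dot x z.
Proof. by rewrite /dot mulmxBr !mxE. Qed.

Lemma dotZr a x y : dot x (a *: y) = a * dot x y.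
Proof. by rewrite /dot -scalemxAr mxE. Qed.

Lemma dot0r x : dot x 0 = 0.
Proof. by rewrite /dot mulmx0 mxE. Qed.

Lemma dotBl x y z : dot (x - y) z = dot x z - dot y z.
Proof. by rewrite dotC dotBr !(dotC z). Qed.

Lemma dotZl a x y : dot (a *: x) y = a * dot x y.
Proof. by rewrite dotC dotZr dotC. Qed.

Lemma dot_ge0 x : 0 <= dot x x.
Proof. by rewrite dotE sumr_ge0 // => i _; rewrite -expr2 sqr_ge0. Qed.

Lemma dot_eq0 x : (dot x x == 0) = (x == 0).
Proof.
apply/eqP/eqP => [|->]; last by rewrite dot0r.
rewrite dotE => xx0; apply/matrixP => i j; rewrite ord1 mxE.
have /eqP : x i 0 * x i 0 = 0.
  by apply: (psumr_eq0P _ xx0) => // k _; rewrite -expr2 sqr_ge0.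
by rewrite mulf_eq0 orbb => /eqP.
Qed.

Lemma cauchy_schwarz x y : dot x y ^+ 2 <= dot x x * dot y y.
Proof.
have [->|y0] := eqVneq y 0; first by rewrite !dot0r expr0n mulr0.
have yy0 : 0 < dot y y by rewrite lt_neqAle eq_sym dot_eq0 y0 dot_ge0.
set s := dot x y / dot y y.
have := dot_ge0 (x - s *: y).
rewrite dotBl !dotBr !dotZl !dotZr (dotC y x) => h; rewrite -subr_ge0.
have -> : dot x x * dot y y - dot x y ^+ 2
        = dot y y * (dot x x - s * dot x y - (s * dot x y - s * (s * dot y y))).
  by rewrite /s; field; rewrite gt_eqF.
by rewrite mulr_ge0 // ltW.
Qed.

End DotProduct.

Lemma dot_mulmx_le (R : realFieldType) m n (A : 'M[R]_(m, n)) x :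
  dot (A *m x) (A *m x) <= (\sum_i \sum_j A i j ^+ 2) * dot x x.
Proof.
rewrite dotE big_distrl /=; apply: ler_sum => i _.
have -> : (A *m x) i 0 = dot (row i A)^T x.
  by rewrite dotE mxE; apply: eq_bigr => j _; rewrite !mxE.
have -> : \sum_j A i j ^+ 2 = dot (row i A)^T (row i A)^T.
  by rewrite dotE; apply: eq_bigr => j _; rewrite !mxE expr2.
by rewrite -expr2 cauchy_schwarz.
Qed.

Section OrthogonalProjection.
Variables (R : realFieldType) (n : nat).
Implicit Types (P : 'M[R]_n) (y : 'cV[R]_n).

Definition orthoproj P := P^T = P /\ P *m P = P.

Lemma orthoprojC P : orthoproj P -> orthoproj (1%:M - P).
Proof.
move=> [Psym Pidem]; split; first by rewrite linearB /= trmx1 Psym.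
by rewrite mulmxBl mul1mx mulmxBr mulmx1 Pidem subrr subr0.
Qed.

Lemma dot_orthoproj P y : orthoproj P -> dot y (P *m y) = dot (P *m y) (P *m y).
Proof. by move=> [Psym Pidem]; rewrite [RHS]dot_mulmx Psym mulmxA Pidem dotC. Qed.

Lemma dot_orthoproj_le P y : orthoproj P -> dot (P *m y) (P *m y) <= dot y y.
Proof.
move=> oP; have oPC := orthoprojC oP.
have -> : dot y y = dot y (P *m y) + dot y ((1%:M - P) *m y).
  by rewrite -dotDr -mulmxDl addrC subrK mul1mx.
by rewrite dot_orthoproj // (dot_orthoproj _ oPC) lerDl dot_ge0.
Qed.

End OrthogonalProjection.

Section Norms.
Variable R : realType.

Lemma vnormE n (x : 'cV[R]_n) : vnorm x = Num.sqrt (dot x x).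
Proof. by rewrite /vnorm dotE; congr Num.sqrt; apply: eq_bigr => i _; rewrite expr2. Qed.

Lemma vnorm_ge0 n (x : 'cV[R]_n) : 0 <= vnorm x.
Proof. by rewrite vnormE sqrtr_ge0. Qed.

Lemma vnorm0 n : vnorm (0 : 'cV[R]_n) = 0.
Proof. by rewrite vnormE dot0r sqrtr0. Qed.

Lemma vnorm_sqr n (x : 'cV[R]_n) : vnorm x ^+ 2 = dot x x.
Proof. by rewrite vnormE sqr_sqrtr ?dot_ge0. Qed.

Lemma vnormZ n a (x : 'cV[R]_n) : vnorm (a *: x) = `|a| * vnorm x.
Proof. by rewrite !vnormE dotZl dotZr mulrA -expr2 sqrtrM ?sqr_ge0 // sqrtr_sqr. Qed.

Lemma dot_le_vnorm n (x y : 'cV[R]_n) : dot x y <= vnorm x * vnorm y.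
Proof.
rewrite (le_trans (ler_norm _)) // -sqrtr_sqr !vnormE -sqrtrM ?dot_ge0 //.
by rewrite ler_wsqrtr ?cauchy_schwarz.
Qed.

Section OperatorNorm.
Variables (m n : nat) (A : 'M[R]_(m, n)).

Lemma opnorm_ub x : vnorm x <= 1 -> vnorm (A *m x) <= opnorm A.
Proof.
move=> x1; apply: ub_le_sup; last by exists x.
exists (Num.sqrt (\sum_i \sum_j A i j ^+ 2)) => _ [y y1 <-].
rewrite vnormE ler_wsqrtr // (le_trans (dot_mulmx_le _ _)) // ler_piMr //.
  by apply: sumr_ge0 => i _; apply: sumr_ge0 => j _; rewrite sqr_ge0.
by rewrite -vnorm_sqr expr_le1 ?vnorm_ge0.
Qed.

Lemma opnorm_ge0 : 0 <= opnorm A.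
Proof. by have := @opnorm_ub 0; rewrite mulmx0 !vnorm0 ler01 => /(_ isT). Qed.

Lemma vnorm_mulmx_le x : vnorm (A *m x) <= opnorm A * vnorm x.
Proof.
have [->|x0] := eqVneq x 0; first by rewrite mulmx0 !vnorm0 mulr0.
have nx0 : 0 < vnorm x.
  by rewrite vnormE sqrtr_gt0 lt_neqAle eq_sym dot_eq0 x0 dot_ge0.
have := @opnorm_ub ((vnorm x)^-1 *: x).
rewrite -scalemxAr !vnormZ ger0_norm ?invr_ge0 ?vnorm_ge0 // mulVf ?gt_eqF //.
by rewrite lexx mulrC -ler_pdivrMr //; apply.
Qed.

Lemma opnorm_le c : (forall x, vnorm x <= 1 -> vnorm (A *m x) <= c) -> opnorm A <= c.
Proof.
move=> Ac; apply: ge_sup => [|_ [x x1 <-]]; last exact: Ac.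
by exists (vnorm (A *m 0)), 0 => //=; rewrite vnorm0.
Qed.

End OperatorNorm.

Lemma dot_mulmx_le_opnorm n (A : 'M[R]_n) x : dot x (A *m x) <= opnorm A * dot x x.
Proof.
rewrite (le_trans (dot_le_vnorm _ _)) // -vnorm_sqr expr2 mulrCA.
by rewrite ler_wpM2l ?vnorm_ge0 ?vnorm_mulmx_le.
Qed.

End Norms.

Section Projections.
Variables (R : realType) (n : nat).

Lemma projS_diag (W : {set 'I_n}) : projS W = diag_mx (\row_i (i \in W)%:R) :> 'M[R]_n.
Proof.
apply/matrixP => i j; rewrite !mxE eq_sym.
by case: (j == i); case: (i \in W).
Qed.

Lemma orthoproj_projS (W : {set 'I_n}) : orthoproj (projS W : 'M[R]_n).
Proof.
rewrite projS_diag; split; first exact: tr_diag_mx.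
rewrite mulmx_diag; congr diag_mx; apply/rowP => i; rewrite !mxE.
by case: (i \in W); rewrite ?mulr1 ?mulr0.
Qed.

Variables (U : 'M[R]_n) (M : nat).
Hypothesis U_orthonormal : U^T *m U = 1%:M.
Local Notation P := (projB U M).

Lemma projB_mulmx y :
  P *m y = \sum_(k < n | (k < M)%N) dot (col k U) y *: col k U.
Proof.
rewrite /projB mulmx_suml; apply: eq_bigr => k _.
by rewrite -mulmxA [_ *m y]mx11_scalar mul_mx_scalar.
Qed.

Lemma dot_col (k l : 'I_n) : dot (col k U) (col l U) = (k == l)%:R.
Proof.
have := congr1 (fun B : 'M[R]_n => B k l) U_orthonormal; rewrite /= !mxE => <-.
by rewrite dotE; apply: eq_bigr => i _; rewrite !mxE.
Qed.

Lemma projB_col (l : 'I_n) : (l < M)%N -> P *m col l U = col l U.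
Proof.
move=> lM; rewrite projB_mulmx (bigD1 l) //= dot_col eqxx scale1r.
by rewrite big1 ?addr0 // => k /andP[_ kl]; rewrite dot_col (negbTE kl) scale0r.
Qed.

Lemma orthoproj_projB : orthoproj P.
Proof.
split; first by rewrite raddf_sum; apply: eq_bigr => k _; rewrite /= trmx_mul trmxK.
by rewrite {1}/projB mulmx_sumr; apply: eq_bigr => k kM; rewrite mulmxA projB_col.
Qed.

Lemma inBME x : inBM U M x <-> P *m x = x.
Proof.
split=> [[c ->]|Px]; last by exists (fun k => dot (col k U) x); rewrite -{1}Px projB_mulmx.
by rewrite mulmx_sumr; apply: eq_bigr => k kM; rewrite -scalemxAr projB_col.
Qed.

Lemma inBM_projB y : inBM U M (P *m y).
Proof. by apply/inBME; rewrite mulmxA orthoproj_projB.2. Qed.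

End Projections.

Section NormingSets.
Variables (R : realType) (n : nat) (U : 'M[R]_n) (M : nat) (W : {set 'I_n}).
Hypothesis U_orthonormal : U^T *m U = 1%:M.
Local Notation P := (projB U M).
Local Notation S := (projS W : 'M[R]_n).
Local Notation T := (P *m (1%:M - S) *m P).

Let oP : orthoproj P := orthoproj_projB M U_orthonormal.
Let oS : orthoproj S := orthoproj_projS R W.
Let inBMP := inBME M U_orthonormal.

Lemma dot_projT_le y :
  dot (T *m y) (T *m y) <= dot (P *m y) (P *m y) - dot (S *m (P *m y)) (S *m (P *m y)).
Proof.
rewrite -!mulmxA (le_trans (dot_orthoproj_le _ oP)) //.
rewrite -(dot_orthoproj _ (orthoprojC oS)) mulmxBl mul1mx dotBr.
by rewrite (dot_orthoproj _ oS).
Qed.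

Lemma dot_projT x : inBM U M x -> dot x (T *m x) = dot x x - dot (S *m x) (S *m x).
Proof.
move=> /inBMP Px.
by rewrite -!mulmxA dot_mulmx oP.1 !Px mulmxBl mul1mx dotBr (dot_orthoproj _ oS).
Qed.

Lemma opnorm_projT_gap x :
  inBM U M x -> (1 - opnorm T) * dot x x <= dot (S *m x) (S *m x).
Proof. by move=> xB; have := dot_mulmx_le_opnorm T x; rewrite dot_projT //; lra. Qed.

Lemma norming_of_opnorm_lt1 : opnorm T < 1 -> norming U M W.
Proof.
move=> T1 x y xB yB; have /inBMP Px := xB; have /inBMP Py := yB.
rewrite -!mulmxA Px Py => /eqP; rewrite -subr_eq0 -mulmxBr => /eqP Sxy0.
have xyB : inBM U M (x - y) by apply/inBMP; rewrite mulmxBr Px Py.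
have := opnorm_projT_gap xyB; rewrite Sxy0 dot0r pmulr_rle0 ?subr_gt0 // => xy0.
by apply/eqP; rewrite -subr_eq0 -dot_eq0 eq_le xy0 dot_ge0.
Qed.

Lemma norming_const_le :
  opnorm T < 1 -> norming_const U M W <= 1 / (1 - opnorm T).
Proof.
move=> T1; have T0 := opnorm_ge0 T.
apply: ge_sup => [|_ [x [xB Sx1] <-]].
  exists (vnorm (0 : 'cV[R]_n)), 0 => //; split; first by apply/inBMP; rewrite mulmx0.
  by rewrite !mulmx0 vnorm0 ler01.
have /inBMP Px := xB; move: Sx1; rewrite -mulmxA Px => Sx1.
have := opnorm_projT_gap xB; rewrite -!vnorm_sqr ler_pdivlMr ?subr_gt0 // => gap.
have := vnorm_ge0 x; have := vnorm_ge0 (S *m x); nra.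
Qed.

Lemma norming_unitmx : norming U M W -> P *m S *m P + (1%:M - P) \in unitmx.
Proof.
move=> normW; set G := _ + _.
have Gsym : G^T = G by rewrite /G linearD linearB /= !trmx_mul trmx1 oP.1 oS.1 mulmxA.
rewrite unitmxE unitfE; apply/negP => /det0P [v v0 vG].
pose x := v^T.
have Gx : G *m x = 0 by rewrite -Gsym -trmx_mul vG trmx0.
have : dot x (G *m x) = dot (S *m (P *m x)) (S *m (P *m x))
                        + dot ((1%:M - P) *m x) ((1%:M - P) *m x).
  rewrite /G mulmxDl dotDr -!mulmxA dot_mulmx oP.1 (dot_orthoproj _ oS).
  by rewrite (dot_orthoproj _ (orthoprojC oP)).
rewrite Gx dot0r => /esym/eqP; rewrite paddr_eq0 ?dot_ge0 // !dot_eq0.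
move=> /andP[/eqP SPx0 /eqP PCx0].
have Px0 : P *m x = 0.
  apply: normW; [exact: inBM_projB | by apply/inBMP; rewrite mulmx0 |].
  by rewrite !mulmx0 -!mulmxA [P *m (P *m x)]mulmxA oP.2.
move: v0; rewrite -[v]trmxK -/x.
by move: PCx0; rewrite mulmxBl mul1mx Px0 subr0 => ->; rewrite trmx0 eqxx.
Qed.

Lemma norming_bounded_below : norming U M W ->
  exists2 K, 1 <= K & forall x, inBM U M x -> dot x x <= K * dot (S *m x) (S *m x).
Proof.
move=> normW; pose B := invmx (P *m S *m P + (1%:M - P)) *m P.
exists (1 + \sum_i \sum_j B i j ^+ 2) => [|x /inBMP Px].
  by rewrite lerDl; apply: sumr_ge0 => i _; apply: sumr_ge0 => j _; rewrite sqr_ge0.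
have xE : x = B *m (S *m x).
  have Gx : (P *m S *m P + (1%:M - P)) *m x = P *m (S *m x).
    by rewrite mulmxDl -!mulmxA Px mulmxBl mul1mx Px subrr addr0.
  by rewrite -mulmxA -Gx mulKmx // norming_unitmx.
rewrite {1 2}xE (le_trans (dot_mulmx_le _ _)) // ler_wpM2r ?dot_ge0 //.
by rewrite lerDr.
Qed.

Lemma opnorm_lt1_of_norming : norming U M W -> opnorm T < 1.
Proof.
move=> normW; have [K K1 xSxK] := norming_bounded_below normW.
have K0 : 0 < K := lt_le_trans ltr01 K1.
have e0 : 0 < K^-1 by rewrite invr_gt0.
apply: (@le_lt_trans _ _ (Num.sqrt (1 - K^-1))); last first.
  by rewrite -[X in _ < X]sqrtr1 ltr_sqrt ?ltr01 // gtrBl.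
apply: opnorm_le => y y1; rewrite vnormE ler_wsqrtr // (le_trans (dot_projT_le y)) //.
have := xSxK _ (inBM_projB M U_orthonormal y).
have := dot_orthoproj_le y oP.
have : dot y y <= 1 by rewrite -vnorm_sqr expr_le1 ?vnorm_ge0.
have := dot_ge0 (P *m y).
set p := dot (P *m y) _; set s := dot (S *m _) _ => p0 yy1 py pKs.
have eps : K^-1 * p <= s by rewrite ler_pdivrMl // mulrC.
have : K^-1 <= 1 by rewrite invr_le1 // unitfE gt_eqF.
move: eps e0; set e := K^-1; nra.
Qed.

End NormingSets.

Theorem theorem6 (R : realType) (n : nat) (A : 'M[R]_n) (U : 'M[R]_n)
  (lam : 'rV[R]_n) (M : nat) (W : {set 'I_n}) :
  A^T = A ->
  (forall i j, 0 <= A i j) ->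
  (forall i, 0 < degree A i) ->
  U^T *m U = 1%:M ->
  normLap A = U *m diag_mx lam *m U^T ->
  (M <= n)%N ->
  (norming U M W <->
     opnorm (projB U M *m (1%:M - projS W) *m projB U M) < 1)
  /\ (norming U M W ->
     norming_const U M W <=
       1 / (1 - opnorm (projB U M *m (1%:M - projS W) *m projB U M))).
Proof.
move=> _ _ _ U_orthonormal _ _.
split; first by split; [exact: opnorm_lt1_of_norming | exact: norming_of_opnorm_lt1].
by move=> /(opnorm_lt1_of_norming U_orthonormal)/(norming_const_le U_orthonormal).
Qed.
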